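(* Let $n,d$ be integers, $0<\alpha<1$, and $d_1=\lceil 1000\log n/\alpha^2\rceil$. Then $T(n,d,\alpha)\le T(n,d_1,\alpha/2)$, where $T(n,d,\alpha)$ denotes the VC dimension of the $(1+\alpha)$-separate contrastive learning problem for $\ell_2$-distances in dimension $d$ on a dataset of size $n$.
   Context: $V$ is a finite set with $|V|=n$. A query is a triple $(u,v,w)$ of elements of $V$, labeled either $(u,v^+,w^-)$ or $(u,w^+,v^-)$. In the $(1+\alpha)$-separate problem for $\ell_2$ in dimension $d$, an embedding $f:V\to\mathbb R^d$ satisfies the labeled query $(u,v^+,w^-)$ if $(1+\alpha)\|f(u)-f(v)\|_2<\|f(u)-f(w)\|_2$ (symmetrically for $(u,w^+,v^-)$). A set $Q$ of queries is shattered if for every labeling of $Q$ there exists $f:V\to\mathbb R^d$ satisfying all labeled queries; $T(n,d,\alpha)$ is the maximum size of a shattered set. *)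

From HB Require Import structures.
From mathcomp Require Import all_boot all_order all_algebra.
From mathcomp Require Import all_classical all_reals.
From mathcomp Require Import exp.
Set Implicit Arguments. Unset Strict Implicit. Unset Printing Implicit Defensive.
Import Order.TTheory GRing.Theory Num.Theory.
Local Open Scope ring_scope.

Section Defs.
Variable R : realType.

Definition l2norm (d : nat) (x : 'rV[R]_d) : R :=
  Num.sqrt (\sum_(i < d) x 0 i ^+ 2).

Definition query (n : nat) : finType := ('I_n * 'I_n * 'I_n)%type.

(* A labeling assigns to a query (u,v,w) either [true], meaning the labeled
   query (u, v^+, w^-), or [false], meaning (u, w^+, v^-). *)
Definition satisfies (n d : nat) (alpha : R) (f : 'I_n -> 'rV[R]_d)
    (q : query n) (lab : bool) : Prop :=
  let: (u, v, w) := q in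
  if lab then (1 + alpha) * l2norm (f u - f v) < l2norm (f u - f w)
  else (1 + alpha) * l2norm (f u - f w) < l2norm (f u - f v).

Definition shattered (n d : nat) (alpha : R) (Q : {set query n}) : Prop :=
  forall lab : query n -> bool,
    exists f : 'I_n -> 'rV[R]_d,
      forall q, q \in Q -> satisfies alpha f q (lab q).

Definition T (n d : nat) (alpha : R) : nat :=
  \max_(Q : {set query n} | `[< shattered d alpha Q >]) #|Q|.

Definition d1 (n : nat) (alpha : R) : nat :=
  `| Num.ceil (1000 * ln (n%:R) / alpha ^+ 2) |%N.

End Defs.

(* Every embedding f of a shattered set in R^d is composed with a linear map
   into R^k, k = d1, that scales each squared distance |f u - f v|^2 by a
   factor in [k (1 - alpha/5), k (1 + alpha/3)]; as
   (1 + alpha/2)^2 (1 + alpha/3) <= (1 + alpha)^2 (1 - alpha/5), a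
   (1 + alpha)-separated query becomes (1 + alpha/2)-separated.
   Such a map exists among the d x k sign matrices (Johnson-Lindenstrauss with
   Rademacher entries, by counting instead of probabilities): pairing a sign
   vector s with s flipped at coordinate i gives the moment recursion
   sum_s Z^(2p+2) <= (2p+1) |x|^2 sum_s Z^(2p) for Z = sum_i s_i x_i, which
   bounds sum_s exp(+-t Z^2); a Chernoff bound over the k columns then leaves
   fewer than a 1/n^2 fraction of bad matrices for each of the n^2 pairs. *)


From HB Require Import structures.
From mathcomp Require Import all_boot all_order all_algebra.
From mathcomp Require Import all_classical all_reals.
From mathcomp Require Import topology normedtype sequences exp.
From mathcomp Require Import ring lra zify.
Import Order.TTheory GRing.Theory Num.Theory.
Import numFieldNormedType.Exports.
Set Implicit Arguments. Unset Strict Implicit. Unset Printing Implicit Defensive.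
Local Open Scope ring_scope.

Section PowerInequalities.
Variable R : realDomainType.

Lemma mixed_powers_le (a b : R) (m j : nat) : (j <= m)%N -> 0 <= a -> 0 <= b ->
  a ^+ (m - j) * b ^+ j + a ^+ j * b ^+ (m - j) <= a ^+ m + b ^+ m.
Proof.
move=> jm a0 b0; rewrite -subr_ge0.
have -> : a ^+ m + b ^+ m - (a ^+ (m - j) * b ^+ j + a ^+ j * b ^+ (m - j)) =
    (a ^+ j - b ^+ j) * (a ^+ (m - j) - b ^+ (m - j)).
  have splitX (y : R) : y ^+ m = y ^+ (m - j) * y ^+ j by rewrite -exprD subnK.
  by rewrite !splitX; ring.
have [ab|ba] := lerP a b.
  by rewrite mulr_le0 // subr_le0 lerXn2r.
by rewrite mulr_ge0 // subr_ge0 lerXn2r // ltW.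
Qed.

Lemma mixed_even_powers_le (u v : R) (p j : nat) : (j <= p.*2)%N ->
  u ^+ (p.*2 - j) * v ^+ j + u ^+ j * v ^+ (p.*2 - j) <= u ^+ p.*2 + v ^+ p.*2.
Proof.
move=> jp; have evenX (y : R) : y ^+ p.*2 = `|y| ^+ p.*2.
  by rewrite -normrX ger0_norm // exprn_even_ge0 // odd_double.
rewrite (evenX u) (evenX v).
apply: le_trans (mixed_powers_le jp (normr_ge0 u) (normr_ge0 v)).
by apply: lerD; rewrite -!normrX -normrM ler_norm.
Qed.

(* Pair the [j]-th and [(2p - j)]-th terms of the sum given by [subrXX]. *)
Lemma subrXX_odd_le (u v : R) (p : nat) :
  2 * ((u - v) * (u ^+ p.*2.+1 - v ^+ p.*2.+1)) <=
  p.*2.+1%:R * ((u - v) ^+ 2 * (u ^+ p.*2 + v ^+ p.*2)).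
Proof.
rewrite subrXX /=; set S := \sum_(i < p.*2.+1) _.
have -> : 2 * ((u - v) * ((u - v) * S)) = (u - v) ^+ 2 * (2 * S) by ring.
rewrite [leRHS]mulrCA; apply: ler_wpM2l; first exact: sqr_ge0.
have -> : 2 * S = \sum_(i < p.*2.+1)
    (u ^+ (p.*2 - i) * v ^+ i + u ^+ i * v ^+ (p.*2 - i)).
  rewrite big_split /= mulr2n mulrDl mul1r; congr (_ + _).
  rewrite /S (reindex_inj rev_ord_inj); apply: eq_bigr => i _.
  by rewrite subKn // -ltnS.
have -> : p.*2.+1%:R * (u ^+ p.*2 + v ^+ p.*2) =
    \sum_(i < p.*2.+1) (u ^+ p.*2 + v ^+ p.*2).
  by rewrite sumr_const card_ord mulr_natl.
by apply: ler_sum => i _; apply: mixed_even_powers_le; rewrite -ltnS.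
Qed.

End PowerInequalities.

Section RademacherMoments.
Variables (R : realFieldType) (d : nat).
Local Notation signs := {ffun 'I_d -> bool}.
Local Notation N := (#|{: signs}|%:R : R).
Implicit Types (x : 'rV[R]_d) (r : signs).

Definition sqnorm (k : nat) (y : 'rV[R]_k) : R := \sum_j y 0 j ^+ 2.

Lemma sqnorm_ge0 k (y : 'rV[R]_k) : 0 <= sqnorm y.
Proof. by apply: sumr_ge0 => j _; exact: sqr_ge0. Qed.

Definition rademacher x r : R := \sum_i (-1) ^+ r i * x 0 i.

Definition moment x (p : nat) : R := \sum_(r : signs) rademacher x r ^+ p.*2.

Definition toggle (i : 'I_d) r : signs := [ffun j => (j == i) (+) r j].

Lemma toggleK i : involutive (toggle i).
Proof. by move=> r; apply/ffunP => j; rewrite !ffunE addKb. Qed.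

Lemma sum_toggle i (F : signs -> R) :
  \sum_(r : signs) F r = \sum_(r : signs) F (toggle i r).
Proof. exact: (reindex_inj (can_inj (toggleK i))). Qed.

Lemma sum_toggle_half i (F : signs -> R) :
  \sum_(r : signs) F r = 2^-1 * \sum_(r : signs) (F r + F (toggle i r)).
Proof. by rewrite big_split /= -sum_toggle; field. Qed.

Lemma sign_toggle i r : (-1) ^+ toggle i r i = - (-1) ^+ r i :> R.
Proof. by rewrite ffunE eqxx signrN. Qed.

Lemma rademacher_toggle x r i :
  rademacher x r - rademacher x (toggle i r) = 2 * ((-1) ^+ r i * x 0 i).
Proof.
rewrite /rademacher (bigD1 i) //= [X in _ - X](bigD1 i) //= sign_toggle.
have -> : \sum_(j | j != i) (-1) ^+ toggle i r j * x 0 j =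
          \sum_(j | j != i) (-1) ^+ r j * x 0 j :> R.
  by apply: eq_bigr => j /negbTE ji; rewrite ffunE ji.
by ring.
Qed.

(* Pairing each sign vector [r] with [toggle i r] flips the sign of the
   [i]-th term of [rademacher x r] and leaves the others unchanged. *)
Lemma moment_coordE x p i :
  \sum_(r : signs) (-1) ^+ r i * x 0 i * rademacher x r ^+ p.*2.+1 =
  4^-1 * \sum_(r : signs) (rademacher x r - rademacher x (toggle i r)) *
    (rademacher x r ^+ p.*2.+1 - rademacher x (toggle i r) ^+ p.*2.+1).
Proof.
rewrite (sum_toggle_half i (fun r => _ * rademacher x r ^+ p.*2.+1)).
have -> : 4^-1 = 2^-1 * 2^-1 :> R by rewrite -invfM; congr _^-1; ring.
rewrite -[in RHS]mulrA [in RHS]mulr_sumr; congr (_ * _); apply: eq_bigr => r _.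
by rewrite rademacher_toggle sign_toggle; field.
Qed.

Lemma momentSE x p : moment x p.+1 =
  \sum_i \sum_(r : signs) (-1) ^+ r i * x 0 i * rademacher x r ^+ p.*2.+1.
Proof.
rewrite exchange_big /=; apply: eq_bigr => r _.
by rewrite doubleS exprS mulr_suml.
Qed.

Lemma moment0 x : moment x 0 = N.
Proof.
by rewrite /moment (eq_bigr (fun=> 1)) ?sumr_const // => r; rewrite expr0.
Qed.

Lemma moment1 x : moment x 1 = sqnorm x * N.
Proof.
rewrite momentSE /sqnorm mulr_suml; apply: eq_bigr => i _.
rewrite moment_coordE (eq_bigr (fun=> 4 * x 0 i ^+ 2)) => [|r _].
  by rewrite sumr_const -mulr_natr; field.
by rewrite !expr1 rademacher_toggle -expr2 !exprMn sqrr_sign; ring.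
Qed.

Lemma moment_step x p : moment x p.+1 <= p.*2.+1%:R * sqnorm x * moment x p.
Proof.
rewrite momentSE /sqnorm mulr_sumr mulr_suml; apply: ler_sum => i _.
rewrite moment_coordE; set c : R := p.*2.+1%:R.
set Z := rademacher x.
apply: (@le_trans _ _ (4^-1 * \sum_(r : signs)
    2 * c * x 0 i ^+ 2 * (Z r ^+ p.*2 + Z (toggle i r) ^+ p.*2))).
  apply: ler_wpM2l; first by rewrite invr_ge0.
  apply: ler_sum => r _.
  have := subrXX_odd_le (Z r) (Z (toggle i r)) p.
  rewrite /Z rademacher_toggle -/c -/Z.
  have <- : ((-1) ^+ r i * x 0 i) ^+ 2 = x 0 i ^+ 2.
    by rewrite exprMn sqrr_sign mul1r.
  by nra.
rewrite -mulr_sumr big_split /= -(sum_toggle i (fun r => Z r ^+ p.*2)).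
by rewrite /Z -/(moment x p); lra.
Qed.

Lemma card_signs_gt0 : 0 < N.
Proof. by rewrite ltr0n card_ffun card_bool expn_gt0. Qed.

Lemma moment_ge0 x p : 0 <= moment x p.
Proof. by apply: sumr_ge0 => r _; rewrite exprn_even_ge0 // odd_double. Qed.

End RademacherMoments.

Arguments card_signs_gt0 {R d}.

Section ExpBounds.
Variable R : realType.

Lemma sum_expR_le (T : finType) (F : T -> R) (B : R) :
  (forall K, \sum_t \sum_(m < K) F t ^+ m / m`!%:R <= B) ->
  \sum_t expR (F t) <= B.
Proof.
move=> partial_le.
have cvg_sum : ((fun K => \sum_t series (exp_coeff (F t)) K) @ \oo -->
    \sum_t expR (F t))%classic.
  apply: cvg_big => //; first exact: add_continuous.
  by move=> t _; exact: is_cvg_series_exp_coeff.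
rewrite -(cvg_lim _ cvg_sum) //; apply: limr_le.
  by apply/cvg_ex; exists (\sum_t expR (F t)).
near=> K; apply: le_trans (partial_le K).
by apply: ler_sum => t _; rewrite /series /= big_mkord.
Unshelve. all: by end_near.
Qed.

Lemma expR_ge_taylor2 (u : R) : 0 <= u -> 1 + u + u ^+ 2 / 2 <= expR u.
Proof.
move=> u0; have incr : nondecreasing_seq (series (exp_coeff u)).
  apply/nondecreasing_seqP => n; rewrite /series /= big_nat_recr //=.
  by rewrite lerDl /exp_coeff /= divr_ge0 // exprn_ge0.
apply: le_trans (nondecreasing_cvgn_le incr (is_cvg_series_exp_coeff u) 3).
rewrite /series /= big_mkord !big_ord_recr big_ord0 /= /exp_coeff /=.
by rewrite expr0 expr1 !divr1 add0r.
Qed.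

Lemma expRN_le_taylor2 (u : R) : 0 <= u -> expR (- u) <= 1 - u + u ^+ 2 / 2.
Proof.
move=> u0; rewrite expRN -div1r ler_pdivrMr ?expR_gt0 //.
apply: le_trans (ler_wpM2l _ (expR_ge_taylor2 u0)).
  have -> : (1 - u + u ^+ 2 / 2) * (1 + u + u ^+ 2 / 2) = 1 + u ^+ 4 / 4.
    by field.
  by rewrite lerDl divr_ge0 // exprn_even_ge0.
have -> : 1 - u + u ^+ 2 / 2 = ((u - 1) ^+ 2 + 1) / 2 by field.
by rewrite divr_ge0 // addr_ge0 // sqr_ge0.
Qed.

Lemma sum_halving_le (w : nat -> R) :
  (forall m, 0 <= w m) -> (forall m, 2 * w m.+3 <= w m.+2) ->
  forall K, \sum_(m < K) w m <= w 0 + w 1 + 2 * w 2.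
Proof.
move=> w_ge0 halving.
have inv K : \sum_(m < K.+2) w m + 2 * w K.+2 <= w 0 + w 1 + 2 * w 2.
  elim: K => [|K IH]; first by rewrite !big_ord_recr big_ord0 /= add0r.
  rewrite big_ord_recr /=; have := halving K; lra.
move=> K; apply: le_trans (inv K).
apply: le_trans (_ : \sum_(m < K.+2) w m <= _).
  by rewrite !big_ord_recr /= -addrA lerDl addr_ge0.
by rewrite lerDl mulr_ge0.
Qed.

End ExpBounds.

Section RademacherMGF.
Variables (R : realType) (d : nat).
Local Notation signs := {ffun 'I_d -> bool}.
Local Notation N := (#|{: signs}|%:R : R).
Variables (x : 'rV[R]_d) (t : R).
Hypothesis t_ge0 : 0 <= t.
Local Notation tau := (t * sqnorm x).

Let tau_ge0 : 0 <= tau.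
Proof. by rewrite mulr_ge0 // sqnorm_ge0. Qed.

(* The [m]-th Taylor term of [\sum_r expR (t * rademacher x r ^+ 2)]. *)
Let moment_weight m := t ^+ m * moment x m / m`!%:R.

Let moment_weight_ge0 m : 0 <= moment_weight m.
Proof. by rewrite divr_ge0 // mulr_ge0 ?exprn_ge0 // moment_ge0. Qed.

Let moment_weightS m :
  moment_weight m.+1 <= tau * (m.*2.+1%:R / m.+1%:R) * moment_weight m.
Proof.
have -> : tau * (m.*2.+1%:R / m.+1%:R) * moment_weight m =
    t ^+ m.+1 / (m.+1)`!%:R * (m.*2.+1%:R * sqnorm x * moment x m).
  rewrite /moment_weight factS natrM exprS; field.
  by rewrite pnatr_eq0 -lt0n fact_gt0 addrC natr1 pnatr_eq0.
rewrite /moment_weight mulrAC; apply: ler_wpM2l (moment_step x m).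
by rewrite divr_ge0 ?exprn_ge0.
Qed.

Let moment_weight0 : moment_weight 0 = N.
Proof. by rewrite /moment_weight moment0 mul1r divr1. Qed.

Let moment_weight1 : moment_weight 1 <= tau * N.
Proof. by have := moment_weightS 0; rewrite moment_weight0 divr1 mulr1. Qed.

Let moment_weight2 : moment_weight 2 <= 3 / 2 * tau ^+ 2 * N.
Proof.
apply: le_trans (moment_weightS 1) _.
have := moment_weight1; have := tau_ge0; have -> : 1.*2.+1%:R = 3 :> R by [].
by nra.
Qed.

Lemma sum_expR_rademacher_le : tau <= 4^-1 ->
  \sum_(r : signs) expR (t * rademacher x r ^+ 2) <=
  N * expR (tau + 3 * tau ^+ 2).
Proof.
move=> tau_small.
have halving m : 2 * moment_weight m.+3 <= moment_weight m.+2.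
  have c_le2 : m.+2.*2.+1%:R / m.+3%:R <= 2 :> R.
    by rewrite ler_pdivrMr ?ltr0Sn // -natrM ler_nat; lia.
  have := moment_weightS m.+2; set c := _ / _ in c_le2 *.
  have tau_c : tau * c <= 2^-1 by have := tau_ge0; nra.
  by have := moment_weight_ge0 m.+2; nra.
apply: sum_expR_le => K.
have -> : \sum_(r : signs) \sum_(m < K)
    (t * rademacher x r ^+ 2) ^+ m / m`!%:R = \sum_(m < K) moment_weight m.
  rewrite exchange_big; apply: eq_bigr => m _.
  rewrite /moment_weight /moment mulr_sumr mulr_suml; apply: eq_bigr => r _.
  by rewrite exprMn -exprM mul2n.
apply: le_trans (sum_halving_le moment_weight_ge0 halving K) _.
apply: le_trans (_ : N * (1 + (tau + 3 * tau ^+ 2)) <= _).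
  have := moment_weight1; have := moment_weight2.
  by rewrite moment_weight0; lra.
by apply: ler_wpM2l (expR_ge1Dx _); exact: ltW card_signs_gt0.
Qed.

Lemma sum_expRN_rademacher_le :
  \sum_(r : signs) expR (- (t * rademacher x r ^+ 2)) <=
  N * expR (- tau + 3 / 2 * tau ^+ 2).
Proof.
apply: le_trans (_ : \sum_(r : signs)
    (1 - t * rademacher x r ^+ 2 + (t * rademacher x r ^+ 2) ^+ 2 / 2) <= _).
  apply: ler_sum => r _; apply: expRN_le_taylor2.
  by rewrite mulr_ge0 // sqr_ge0.
have -> : \sum_(r : signs)
    (1 - t * rademacher x r ^+ 2 + (t * rademacher x r ^+ 2) ^+ 2 / 2) =
    \sum_(r : signs) 1 - t * moment x 1 + t ^+ 2 / 2 * moment x 2.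
  rewrite /moment !mulr_sumr -sumrN -!big_split /=; apply: eq_bigr => r _; ring.
have moment2 : t ^+ 2 / 2 * moment x 2 <=
    t ^+ 2 / 2 * (3 * sqnorm x * (sqnorm x * N)).
  apply: ler_wpM2l; first by rewrite divr_ge0 ?sqr_ge0.
  by rewrite -(moment1 x); exact: moment_step.
rewrite sumr_const moment1.
apply: le_trans (_ : N * (1 + (- tau + 3 / 2 * tau ^+ 2)) <= _); first lra.
by apply: ler_wpM2l (expR_ge1Dx _); exact: ltW card_signs_gt0.
Qed.

End RademacherMGF.

Lemma sum_ffun_prod (R : comPzSemiRingType) (T : finType) (k : nat)
    (F : T -> R) :
  \sum_(S : {ffun 'I_k -> T}) \prod_j F (S j) = (\sum_t F t) ^+ k.
Proof.
by rewrite -(bigA_distr_bigA (fun (j : 'I_k) t => F t)) /= prodr_const card_ord.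
Qed.

Section Chernoff.
Variable R : realType.

Lemma card_le_chernoff (T : finType) (k : nat) (g : T -> R) (M a : R)
    (P : pred {ffun 'I_k -> T}) :
  (forall S, P S -> a < \sum_j g (S j)) -> \sum_t expR (g t) <= M ->
  #|P|%:R <= M ^+ k * expR (- a).
Proof.
move=> P_gt sum_le.
apply: (@le_trans _ _ (\sum_(S : {ffun 'I_k -> T}) expR (\sum_j g (S j) - a))).
  rewrite -sumr_const big_mkcond /=; apply: ler_sum => S _.
  case: ifP => [PS|_]; last exact: expR_ge0.
  by apply: ltW; rewrite expR_gt1 subr_gt0 P_gt.
under eq_bigr do rewrite expRD expR_sum.
rewrite -mulr_suml (sum_ffun_prod k (fun t => expR (g t))).
rewrite ler_wpM2r ?expR_ge0 //.
apply: lerXn2r; rewrite ?nnegrE //; last apply: le_trans sum_le.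
all: by apply: sumr_ge0 => t _; exact: expR_ge0.
Qed.

End Chernoff.

Section SignMatrix.
Variables (R : realType) (d k : nat).
Local Notation signs := {ffun 'I_d -> bool}.
Local Notation N := (#|{: signs}|%:R : R).
Implicit Types (x : 'rV[R]_d) (S : {ffun 'I_k -> signs}).

(* For a uniformly random [S] this is a Rademacher random projection;
   probabilities are replaced by counts over all [S]. *)
Definition sign_mx S : 'M[R]_(d, k) := \matrix_(i, j) (-1) ^+ S j i.

Lemma sqnorm_mul_sign_mx x S :
  sqnorm (x *m sign_mx S) = \sum_j rademacher x (S j) ^+ 2.
Proof.
apply: eq_bigr => j _; rewrite !mxE; congr (_ ^+ 2).
by apply: eq_bigr => i _; rewrite mxE mulrC.
Qed.

Lemma card_sign_mx_upper_tail x (eps tau : R) :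
  0 < sqnorm x -> 0 < tau -> tau <= 4^-1 ->
  #|[pred S | (1 + eps) * k%:R * sqnorm x < sqnorm (x *m sign_mx S)]|%:R <=
  N ^+ k * expR (- (k%:R * (tau * eps - 3 * tau ^+ 2))).
Proof.
move=> x_gt0 tau_gt0 tau_small; set t := tau / sqnorm x.
have t_gt0 : 0 < t by rewrite divr_gt0.
have tauE : t * sqnorm x = tau by rewrite divfK // gt_eqF.
have mgf := sum_expR_rademacher_le (x := x) (ltW t_gt0); rewrite tauE in mgf.
apply: le_trans (card_le_chernoff (a := t * ((1 + eps) * k%:R * sqnorm x)) _
  (mgf tau_small)) _.
  by move=> S /=; rewrite sqnorm_mul_sign_mx -mulr_sumr ltr_pM2l.
rewrite exprMn -expRM_natl -(mulrA (_ ^+ k)) -expRD.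
by rewrite ler_pM2l ?exprn_gt0 ?card_signs_gt0 // ler_expR -tauE; lra.
Qed.

Lemma card_sign_mx_lower_tail x (eps tau : R) : 0 < sqnorm x -> 0 < tau ->
  #|[pred S | sqnorm (x *m sign_mx S) < (1 - eps) * k%:R * sqnorm x]|%:R <=
  N ^+ k * expR (- (k%:R * (tau * eps - 3 / 2 * tau ^+ 2))).
Proof.
move=> x_gt0 tau_gt0; set t := tau / sqnorm x.
have t_gt0 : 0 < t by rewrite divr_gt0.
have tauE : t * sqnorm x = tau by rewrite divfK // gt_eqF.
have mgf := sum_expRN_rademacher_le x (ltW t_gt0); rewrite tauE in mgf.
apply: le_trans (card_le_chernoff (a := - (t * ((1 - eps) * k%:R * sqnorm x))) _
  mgf) _.
  by move=> S /=; rewrite sqnorm_mul_sign_mx sumrN -mulr_sumr ltrN2 ltr_pM2l.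
rewrite exprMn -expRM_natl -(mulrA (_ ^+ k)) -expRD.
by rewrite ler_pM2l ?exprn_gt0 ?card_signs_gt0 // ler_expR -tauE; lra.
Qed.

End SignMatrix.

Arguments sign_mx {R d k} S.

Lemma card_bigcup_le (I T : finType) (B : I -> {set T}) :
  (#|\bigcup_i B i| <= \sum_i #|B i|)%N.
Proof.
elim/big_rec2: _ => [|i n U _ le_Un]; first by rewrite cards0.
exact: leq_trans (leq_card_setU _ _) (leq_add (leqnn _) le_Un).
Qed.

Section NearIsometry.
Variables (R : realType) (d k : nat).
Local Notation signs := {ffun 'I_d -> bool}.
Local Notation N := (#|{: signs}|%:R : R).
Implicit Types (x : 'rV[R]_d) (S : {ffun 'I_k -> signs}).

Definition near_isometry (a : R) x S : bool :=
  ((1 - a / 5) * k%:R * sqnorm x <= sqnorm (x *m sign_mx S)) &&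
  (sqnorm (x *m sign_mx S) <= (1 + a / 3) * k%:R * sqnorm x).

Lemma card_not_near_isometry x (a : R) : 0 < a -> a < 1 ->
  #|[set S | ~~ near_isometry a x S]|%:R <=
  2 * N ^+ k * expR (- (k%:R * a ^+ 2 / 150)).
Proof.
move=> a_gt0 a_lt1.
have [x0|x_neq0] := eqVneq (sqnorm x) 0.
  rewrite (_ : [set S | _] = finset.set0) ?cards0.
    by rewrite !mulr_ge0 ?expR_ge0 ?exprn_ge0 // ltW ?card_signs_gt0.
  apply/setP => S; rewrite !inE /near_isometry x0 !mulr0.
  suff -> : sqnorm (x *m sign_mx S) = 0 by rewrite lexx.
  have x_eq0 : x = 0.
    apply/rowP => i; apply/eqP; rewrite mxE -sqrf_eq0; apply/eqP.
    by apply: (psumr_eq0P _ x0) => // j _; exact: sqr_ge0.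
  by rewrite x_eq0 mul0mx /sqnorm big1 // => j _; rewrite mxE expr0n.
have x_gt0 : 0 < sqnorm x by rewrite lt0r x_neq0 sqnorm_ge0.
have ka2_ge0 : 0 <= k%:R * a ^+ 2 by rewrite mulr_ge0 ?sqr_ge0.
have -> : [set S | ~~ near_isometry a x S] =
    [set S | sqnorm (x *m sign_mx S) < (1 - a / 5) * k%:R * sqnorm x] :|:
    [set S | (1 + a / 3) * k%:R * sqnorm x < sqnorm (x *m sign_mx S)].
  by apply/setP => S; rewrite !inE negb_and -!ltNge.
apply: le_trans (_ : (#|[set S | _]| + #|[set S | _]|)%:R <= _).
  by rewrite ler_nat; exact: leq_card_setU.
rewrite natrD !cardsE -[leRHS]mulrA [leRHS]mulr_natl mulr2n.
apply: lerD.
  apply: le_trans (card_sign_mx_lower_tail k (a / 5) x_gt0 (tau := a / 15) _) _.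
    by rewrite divr_gt0.
  by rewrite ler_pM2l ?exprn_gt0 ?card_signs_gt0 // ler_expR; lra.
apply: le_trans (card_sign_mx_upper_tail k (a / 3) x_gt0 (tau := a / 24) _ _) _.
- by rewrite divr_gt0.
- lra.
by rewrite ler_pM2l ?exprn_gt0 ?card_signs_gt0 // ler_expR; lra.
Qed.

Lemma exists_near_isometry (I : finType) (x : I -> 'rV[R]_d) (a : R) :
  0 < a -> a < 1 -> 2 * #|I|%:R * expR (- (k%:R * a ^+ 2 / 150)) < 1 ->
  exists S, forall i, near_isometry a (x i) S.
Proof.
move=> a_gt0 a_lt1 few_bad.
set B := \bigcup_i [set S | ~~ near_isometry a (x i) S].
have B_small : (#|B| < #|{: {ffun 'I_k -> signs}}|)%N.
  apply: leq_ltn_trans (card_bigcup_le _) _; rewrite -(ltr_nat R) natr_sum.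
  apply: le_lt_trans (ler_sum _ (fun i _ =>
    card_not_near_isometry (x i) a_gt0 a_lt1)) _.
  have -> : #|{: {ffun 'I_k -> signs}}|%:R = N ^+ k.
    by rewrite card_ffun card_ord natrX.
  rewrite sumr_const -[ltLHS]mulr_natr -/#|I|.
  have : 0 < N ^+ k by rewrite exprn_gt0 ?card_signs_gt0.
  nra.
have /card_gt0P [S] : (0 < #|~: B|)%N by rewrite -(ltn_add2l #|B|) addn0 cardsC.
rewrite inE => /bigcupP S_good; exists S => i; apply/negPn/negP => bad.
by apply: S_good; exists i; rewrite ?inE.
Qed.

End NearIsometry.

Section Separation.
Variable R : realType.

Lemma l2normE k (y : 'rV[R]_k) : l2norm y = Num.sqrt (sqnorm y).
Proof. by []. Qed.

Lemma near_isometry_separation d k (S : {ffun 'I_k -> {ffun 'I_d -> bool}})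
    (a : R) (x y : 'rV[R]_d) :
  0 < a -> a < 1 -> (0 < k)%N -> near_isometry a x S -> near_isometry a y S ->
  (1 + a) * l2norm x < l2norm y ->
  (1 + a / 2) * l2norm (x *m sign_mx S) < l2norm (y *m sign_mx S).
Proof.
move=> a_gt0 a_lt1 k_gt0 /andP[_ x_le] /andP[y_ge _].
have kR_gt0 : 0 < k%:R :> R by rewrite ltr0n.
have ge0 c z : 0 <= c -> c * Num.sqrt z \in Num.nneg.
  by move=> c_ge0; rewrite nnegrE mulr_ge0 ?sqrtr_ge0.
rewrite !l2normE => sep.
have {}sep : (1 + a) ^+ 2 * sqnorm x < sqnorm y.
  move: sep; rewrite -(ltr_pXn2r (n := 2)) ?ge0 ?nnegrE ?sqrtr_ge0 //; last lra.
  by rewrite exprMn !sqr_sqrtr ?sqnorm_ge0.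
rewrite -(ltr_pXn2r (n := 2)) ?ge0 ?nnegrE ?sqrtr_ge0 //; last lra.
rewrite exprMn !sqr_sqrtr ?sqnorm_ge0 //.
set s := sqnorm x in x_le sep *; set t := sqnorm y in y_ge sep *.
have ks_ge0 : 0 <= k%:R * s by rewrite mulr_ge0 ?ler0n ?sqnorm_ge0.
have gain : (1 + a / 2) ^+ 2 * (1 + a / 3) <= (1 + a) ^+ 2 * (1 - a / 5) by nra.
have := ler_wpM2r ks_ge0 gain.
have : (1 - a / 5) * k%:R * ((1 + a) ^+ 2 * s) < (1 - a / 5) * k%:R * t.
  by rewrite ltr_pM2l // mulr_gt0 //; lra.
have := ler_wpM2l (sqr_ge0 (1 + a / 2)) x_le.
lra.
Qed.

End Separation.

Section Reduction.
Variable R : realType.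

Lemma d1_ge (n : nat) (a : R) : (0 < n)%N -> 0 < a ->
  1000 * ln (n%:R : R) <= (d1 n a)%:R * a ^+ 2.
Proof.
move=> n_gt0 a_gt0; have a2_gt0 : 0 < a ^+ 2 by rewrite exprn_gt0.
have n_ge1 : (1 : R) <= n%:R by rewrite ler1n.
have bound_ge0 : 0 <= 1000 * ln (n%:R : R) / a ^+ 2.
  by rewrite divr_ge0 ?sqr_ge0 // mulr_ge0 // ln_ge0.
rewrite -ler_pdivrMr // /d1 natr_absz ger0_norm ?ceil_ge //.
by rewrite ceil_ge0 (lt_le_trans _ bound_ge0) // ltrN10.
Qed.

Lemma union_bound_lt1 (n k : nat) (a : R) : (1 < n)%N ->
  1000 * ln (n%:R : R) <= k%:R * a ^+ 2 ->
  2 * #|{: 'I_n * 'I_n}|%:R * expR (- (k%:R * a ^+ 2 / 150)) < 1.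
Proof.
move=> n_gt1 k_large; set m : R := n%:R.
have m_ge2 : 2 <= m by rewrite (ler_nat R 2).
have m_gt0 : 0 < m by apply: lt_le_trans m_ge2.
have -> : #|{: 'I_n * 'I_n}|%:R = m ^+ 2 by rewrite card_prod card_ord natrM.
have ln_m_ge0 : 0 <= ln m.
  by apply: ln_ge0; apply: le_trans m_ge2; rewrite ler1n.
apply: le_lt_trans (_ : 2 * m ^+ 2 * expR (- (4 * ln m)) < 1).
  apply: ler_wpM2l; first by rewrite mulr_ge0 ?sqr_ge0.
  by rewrite ler_expR lerN2; lra.
rewrite expRN expRM_natl lnK ?posrE // ltr_pdivrMr ?exprn_gt0 // mul1r.
have m2_ge4 : 4 <= m ^+ 2 by nra.
by rewrite -[4%N]/(2 + 2)%N exprD; nra.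
Qed.

Lemma exists_separating_embedding (n d : nat) (f : 'I_n -> 'rV[R]_d) (a : R) :
  0 < a -> a < 1 ->
  exists g : 'I_n -> 'rV[R]_(d1 n a), forall u v w,
    (1 + a) * l2norm (f u - f v) < l2norm (f u - f w) ->
    (1 + a / 2) * l2norm (g u - g v) < l2norm (g u - g w).
Proof.
move=> a_gt0 a_lt1; have [n_le1|n_gt1] := leqP n 1.
  exists (fun=> 0) => u v w.
  have -> : v = w by apply: ord_inj; move: (ltn_ord v) (ltn_ord w); lia.
  by rewrite !l2normE => sep; have := sqrtr_ge0 (sqnorm (f u - f w)); nra.
have k_large := d1_ge (ltnW n_gt1) a_gt0.
have ln_n_gt0 : 0 < ln (n%:R : R) by apply: ln_gt0; rewrite ltr1n.
have k_gt0 : (0 < d1 n a)%N.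
  by rewrite lt0n; apply/eqP => k0; move: k_large; rewrite k0 mul0r; lra.
have [S S_near] := exists_near_isometry
  (fun uv : 'I_n * 'I_n => f uv.1 - f uv.2) a_gt0 a_lt1
  (union_bound_lt1 n_gt1 k_large).
exists (fun u => f u *m sign_mx S) => u v w sep.
rewrite -!mulmxBl.
exact: near_isometry_separation (S_near (u, v)) (S_near (u, w)) sep.
Qed.

Lemma shattered_d1 (n d : nat) (a : R) (Q : {set query n}) : 0 < a -> a < 1 ->
  shattered d a Q -> shattered (d1 n a) (a / 2) Q.
Proof.
move=> a_gt0 a_lt1 Q_shattered lab; have [f f_sat] := Q_shattered lab.
have [g g_sep] := exists_separating_embedding f a_gt0 a_lt1.
exists g => -[[u v] w] /f_sat /=; case: (lab _); exact: g_sep.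
Qed.

End Reduction.

Theorem mainTheorem11 (R : realType) (n d : nat) (alpha : R) :
  0 < alpha -> alpha < 1 ->
  (T n d alpha <= T n (d1 n alpha) (alpha / 2))%N.
Proof.
move=> alpha_gt0 alpha_lt1; apply/bigmax_leqP => Q /asboolP Q_shattered.
by apply: leq_bigmax_cond; apply/asboolP; exact: shattered_d1.
Qed.
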